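(* Let $G=(V,E)$ be a $2$-uniform directed hypergraph with unit edge weights and no loops, containing both undirected edges $\{u,v\}$ (with, say, $T(e)=e$, $H(e)=\emptyset$) and directed edges $(u,v)$ (with $T(e)=\{u\}$, $H(e)=\{v\}$), and such that any unordered pair of distinct nodes is contained in at most one edge. Let $q\in\mathbb R$. Equip $G$ with the directed hypergraph cellular sheaf of stalk dimension $d=1$ and charge $q$ with $\mathcal F_{u\trianglelefteq e}=\mathcal F_{v\trianglelefteq e}=\sqrt2$ for every undirected edge $e=\{u,v\}$ and $\mathcal F_{u\trianglelefteq e}=\mathcal F_{v\trianglelefteq e}=1$ for every directed edge $e=(u,v)$. Then $L^{\vec{\mathcal F}}=L^{(q)}$, the Magnetic Laplacian of $G$. In particular, for $q=\tfrac14$, $L^{\vec{\mathcal F}}$ equals the Sign-Magnetic Laplacian of $G$.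
   Context: A directed hypergraph is $\mathcal H=(V,E)$ with $n=|V|$, $m=|E|$, each hyperedge $e\in E$ a nonempty subset of $V$ partitioned into disjoint sets $T(e)$ (tail) and $H(e)$ (head) with $e=T(e)\cup H(e)$; $\delta_e:=|e|$. A directed hypergraph cellular sheaf with charge $q\in\mathbb R$ and stalk dimension $d$ consists of: for each $e\in E$, $u\in V$, the scalar $\mathcal S^{(q)}_{u\trianglelefteq e}=1$ if $u\in H(e)$, $=e^{-2\pi\mathbf i q}$ if $u\in T(e)$, $=0$ otherwise; for each incidence $u\in e$ a real matrix $\mathcal F_{u\trianglelefteq e}\in\mathbb R^{d\times d}$ and $\vec{\mathcal F}_{u\trianglelefteq e}:=\mathcal S^{(q)}_{u\trianglelefteq e}\mathcal F_{u\trianglelefteq e}$. Let $B^{(q)}\in\mathbb C^{md\times nd}$ have $d\times d$ block $(e,u)$ equal to $\vec{\mathcal F}_{u\trianglelefteq e}$ if $u\in e$ and $0$ otherwise; $D_E=\mathrm{diag}(\delta_1I_d,\dots,\delta_mI_d)$; $D_u:=\sum_{e\ni u}\mathcal F_{u\trianglelefteq e}^\top\mathcal F_{u\trianglelefteq e}$; $D_V=\mathrm{diag}(D_1,\dots,D_n)$; $L^{\vec{\mathcal F}}:=D_V-(B^{(q)})^\dagger D_E^{-1}B^{(q)}$. Magnetic Laplacian: let $A\in\{0,1\}^{n\times n}$ with $A_{uv}=A_{vu}=1$ for each undirected edge $\{u,v\}$, $A_{uv}=1$ for each directed edge $(u,v)$, and $0$ otherwise; $A_s:=\tfrac12(A+A^\top)$;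 $D_s$ diagonal with $(D_s)_{uu}=\sum_v(A_s)_{uv}$; $\Theta^{(q)}:=2\pi q(A-A^\top)$; $H^{(q)}:=A_s\odot\exp(\mathbf i\Theta^{(q)})$ (entrywise product and entrywise exponential); $L^{(q)}:=D_s-H^{(q)}$. For unit-weight graphs of this type the Sign-Magnetic Laplacian coincides with $L^{(1/4)}$. *)

From HB Require Import structures.
From mathcomp Require Import all_boot all_order all_algebra.
From mathcomp Require Import complex.
From mathcomp Require Import reals trigo.
Set Implicit Arguments. Unset Strict Implicit. Unset Printing Implicit Defensive.
Import Order.TTheory GRing.Theory Num.Theory.
Local Open Scope ring_scope.
Local Open Scope complex_scope.

Section Defs.
Variable R : realType.
Local Notation C := R[i].

Definition expi (th : R) : C := (cos th +i* sin th).

Definition adjmx (p k : nat) (M : 'M[C]_(p, k)) : 'M[C]_(k, p) :=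
  (map_mx conjc M)^T.

(* A directed hypergraph on vertices 'I_n with edges 'I_m is given by
   tail sets T e and head sets Hd e (disjoint, union nonempty). *)
Definition edge (n m : nat) (T Hd : 'I_m -> {set 'I_n}) (e : 'I_m) :
  {set 'I_n} := T e :|: Hd e.

Definition is_dhypergraph (n m : nat) (T Hd : 'I_m -> {set 'I_n}) : Prop :=
  forall e, T e :&: Hd e = set0 /\ edge T Hd e != set0.

Definition Sq (n m : nat) (T Hd : 'I_m -> {set 'I_n}) (q : R)
  (e : 'I_m) (u : 'I_n) : C :=
  if u \in Hd e then 1
  else if u \in T e then expi (- (2 * pi * q))
  else 0.

(* Stalk dimension d = 1: restriction maps are scalars F e u = F_{u <| e}. *)
Definition Bq (n m : nat) (T Hd : 'I_m -> {set 'I_n}) (F : 'I_m -> 'I_n -> R)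
  (q : R) : 'M[C]_(m, n) :=
  \matrix_(e, u) (if u \in edge T Hd e then Sq T Hd q e u * (F e u)%:C else 0).

Definition DE (n m : nat) (T Hd : 'I_m -> {set 'I_n}) : 'M[C]_m :=
  diag_mx (\row_e (#|edge T Hd e|%:R : C)).

Definition DV (n m : nat) (T Hd : 'I_m -> {set 'I_n}) (F : 'I_m -> 'I_n -> R)
  : 'M[C]_n :=
  diag_mx (\row_u ((\sum_(e | u \in edge T Hd e) F e u * F e u)%:C)).

Definition sheafLaplacian (n m : nat) (T Hd : 'I_m -> {set 'I_n})
  (F : 'I_m -> 'I_n -> R) (q : R) : 'M[C]_n :=
  DV T Hd F - adjmx (Bq T Hd F q) *m invmx (DE T Hd) *m Bq T Hd F q.

Definition is_undirected_edge (n m : nat) (T Hd : 'I_m -> {set 'I_n})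
  (e : 'I_m) (u v : 'I_n) : bool :=
  (u != v) && (T e == [set u; v]) && (Hd e == set0).

Definition is_directed_edge (n m : nat) (T Hd : 'I_m -> {set 'I_n})
  (e : 'I_m) (u v : 'I_n) : bool :=
  (u != v) && (T e == [set u]) && (Hd e == [set v]).

Definition adjA (n m : nat) (T Hd : 'I_m -> {set 'I_n}) : 'M[R]_n :=
  \matrix_(u, v) (if [exists e, is_undirected_edge T Hd e u v
                             || is_directed_edge T Hd e u v] then 1 else 0).

Definition symA (n m : nat) (T Hd : 'I_m -> {set 'I_n}) : 'M[R]_n :=
  2^-1 *: (adjA T Hd + (adjA T Hd)^T).

Definition degS (n m : nat) (T Hd : 'I_m -> {set 'I_n}) : 'M[R]_n :=
  diag_mx (\row_u (\sum_v symA T Hd u v)).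

Definition Theta (n m : nat) (T Hd : 'I_m -> {set 'I_n}) (q : R) : 'M[R]_n :=
  (2 * pi * q) *: (adjA T Hd - (adjA T Hd)^T).

Definition Hq (n m : nat) (T Hd : 'I_m -> {set 'I_n}) (q : R) : 'M[C]_n :=
  \matrix_(u, v) ((symA T Hd u v)%:C * expi (Theta T Hd q u v)).

Definition magneticLaplacian (n m : nat) (T Hd : 'I_m -> {set 'I_n}) (q : R)
  : 'M[C]_n :=
  map_mx (fun x : R => x%:C) (degS T Hd) - Hq T Hd q.

End Defs.

From HB Require Import structures.
From mathcomp Require Import all_boot all_order all_algebra.
From mathcomp Require Import complex.
From mathcomp Require Import reals trigo.
From mathcomp Require Import ring.
Set Implicit Arguments.
Unset Strict Implicit.
Unset Printing Implicit Defensive.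
Import Order.TTheory GRing.Theory Num.Theory.
Local Open Scope ring_scope.
Local Open Scope complex_scope.

(* Every edge has exactly two ends, so D_E = 2 I and L^F = D_V - B^dagger B / 2.
   Entry (x, y) of B^dagger B is a sum over the edges containing both x and y;
   off the diagonal at most one edge contributes, namely
   F_x F_y exp(2 pi i q ([x in T] - [y in T])).  The weights sqrt 2 and 1 are
   exactly those for which F_x F_y = [x in T] + [y in T] = 2 (A_s)_xy, while
   [x in T] - [y in T] = A_xy - A_yx; this gives -H^(q)_xy.  On the diagonal
   both sides equal (1/2) sum_(e ni x) F_x^2, since every edge at x has exactly
   one other end. *)

Lemma card2_set2 (T : finType) (A : {set T}) (x y : T) :
  #|A| = 2 -> x \in A -> y \in A -> x != y -> A = [set x; y].
Proof.
move=> A2 xA yA xy; apply/esym/eqP; rewrite eqEcard A2 cards2 xy andbT.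
by apply/subsetP => z; rewrite !inE => /orP[]/eqP->.
Qed.

Lemma card2_setD1 (T : finType) (A : {set T}) (x : T) :
  #|A| = 2 -> x \in A -> exists y, A :\ x = [set y].
Proof.
move=> A2 xA; apply/cards1P.
by move: (cardsD1 x A); rewrite A2 xA add1n => -[<-].
Qed.

Section Expi.
Variable R : realType.

Lemma expiD (a b : R) : expi a * expi b = expi (a + b).
Proof. by apply/eqP; rewrite eq_complex /= cosD sinD; apply/andP; split; apply/eqP; ring. Qed.

Lemma expi0 : expi (0 : R) = 1.
Proof. by rewrite /expi cos0 sin0. Qed.

Lemma conjcM (z w : R[i]) : conjc (z * w) = conjc z * conjc w.
Proof. exact: rmorphM. Qed.

Lemma expiJ (t : R) : conjc (expi t) = expi (- t).
Proof. by rewrite /expi /= cosN sinN. Qed.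

End Expi.

Section DirectedHypergraph.
Variables (R : realType) (n m : nat) (T Hd : 'I_m -> {set 'I_n}).
Variables (F : 'I_m -> 'I_n -> R) (q : R).
Local Notation edge := (edge T Hd).
Local Notation B := (Bq T Hd F q).

Lemma sheafLaplacian_card2E x y : (forall e, #|edge e| = 2) ->
  sheafLaplacian T Hd F q x y =
  (\sum_(e | x \in edge e) F e x * F e x)%:C *+ (x == y)
  - 2^-1 * \sum_e conjc (B e x) * B e y.
Proof.
move=> card2; have DE2 : DE R T Hd = 2%:M by apply/matrixP => i j; rewrite !mxE card2.
rewrite /sheafLaplacian DE2 invmx_scalar mul_mx_scalar -scalemxAl !mxE.
by congr (_ - 2^-1 * _); apply: eq_bigr => e _; rewrite !mxE.
Qed.

Hypothesis HG : is_dhypergraph T Hd.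

Lemma Sq_edge e x : x \in edge e ->
  Sq T Hd q e x = expi (- (2 * pi * q) * (x \in T e)%:R).
Proof.
rewrite /Sq /edge inE; have [/setP/(_ x) + _] := HG e; rewrite !inE.
by case: (x \in T e); case: (x \in Hd e) => //= _ _; rewrite ?mulr1 ?mulr0 ?expi0.
Qed.

Lemma Bq_conjM e x y : conjc (B e x) * B e y =
  if (x \in edge e) && (y \in edge e) then
    (F e x * F e y)%:C * expi (2 * pi * q * ((x \in T e)%:R - (y \in T e)%:R))
  else 0.
Proof.
rewrite !mxE; have [xe|_] := boolP (x \in edge e); last by rewrite conjc0 mul0r.
have [ye|_] := boolP (y \in edge e); last by rewrite mulr0.
rewrite !Sq_edge // conjcM conjc_real expiJ mulrACA expiD -rmorphM mulrC.
by congr (_ * expi _); ring.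
Qed.

Lemma sum_conjBq_diag x :
  \sum_e conjc (B e x) * B e x = \sum_(e | x \in edge e) (F e x * F e x)%:C.
Proof.
rewrite [RHS]big_mkcond; apply: eq_bigr => e _.
by rewrite Bq_conjM andbb subrr mulr0 expi0 mulr1.
Qed.

End DirectedHypergraph.

Section MixedGraph.
Variables (R : realType) (n m : nat) (T Hd : 'I_m -> {set 'I_n}).
Variables (F : 'I_m -> 'I_n -> R) (q : R).
Local Notation edge := (edge T Hd).
Local Notation und := (is_undirected_edge T Hd).
Local Notation dir := (is_directed_edge T Hd).
Local Notation adj := (adjA R T Hd).
Local Notation B := (Bq T Hd F q).

Lemma mem_edge_of_pair e x y :
  und e x y || dir e x y -> (x \in edge e) && (y \in edge e).
Proof.
by rewrite /edge => /orP[]/andP[/andP[_ /eqP->] /eqP->]; rewrite !inE !eqxx ?orbT.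
Qed.

Lemma adjA_diag x : adj x x = 0.
Proof.
by rewrite mxE; case: existsP => // -[e]; rewrite /is_undirected_edge /is_directed_edge eqxx.
Qed.

Lemma adjA_nonadjacent x y :
  (forall e, ~~ ((x \in edge e) && (y \in edge e))) -> adj x y = 0.
Proof.
by move=> nxy; rewrite mxE; case: existsP => // -[e /mem_edge_of_pair]; rewrite (negbTE (nxy e)).
Qed.

Lemma magneticLaplacianE x y : magneticLaplacian T Hd q x y =
  ((\sum_v symA R T Hd x v) *+ (x == y))%:C - Hq T Hd q x y.
Proof. by rewrite /magneticLaplacian !mxE. Qed.

Lemma symA_adjA x y : symA R T Hd x y = 2^-1 * (adj x y + adj y x).
Proof. by rewrite /symA !mxE. Qed.

Lemma Hq_adjA x y :
  Hq T Hd q x y = (symA R T Hd x y)%:C * expi (2 * pi * q * (adj x y - adj y x)).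
Proof. by rewrite /Hq /Theta !mxE. Qed.

Lemma symA_diag x : symA R T Hd x x = 0.
Proof. by rewrite symA_adjA adjA_diag addr0 mulr0. Qed.

Lemma Hq_diag x : Hq T Hd q x x = 0.
Proof. by rewrite Hq_adjA symA_diag rmorph0 mul0r. Qed.

Hypothesis HG : is_dhypergraph T Hd.
Hypothesis edge_kind : forall e, exists u v, und e u v || dir e u v.
Hypothesis edge_of_pair_uniq : forall e1 e2 x y, x != y ->
  x \in edge e1 -> y \in edge e1 -> x \in edge e2 -> y \in edge e2 -> e1 = e2.
Hypothesis F_und : forall e u v w, und e u v -> w \in edge e -> F e w = Num.sqrt 2.
Hypothesis F_dir : forall e u v w, dir e u v -> w \in edge e -> F e w = 1.

Lemma edge_cases e :
  [/\ T e = edge e, Hd e = set0 & {in edge e, forall w, F e w = Num.sqrt 2}] \/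
  exists u v,
    [/\ u != v, T e = [set u], Hd e = [set v] & {in edge e, forall w, F e w = 1}].
Proof.
have [u [v /orP[eu|ed]]] := edge_kind e.
  left; have /andP[/andP[_ /eqP HT] /eqP HH] := eu.
  by split=> [|//|w]; [rewrite /edge HH setU0 | exact: F_und eu].
right; exists u, v; have /andP[/andP[uv /eqP HT] /eqP HH] := ed.
by split=> // w; exact: F_dir ed.
Qed.

Lemma card_edge e : #|edge e| = 2.
Proof.
have [u [v /orP[]/andP[/andP[uv /eqP HT] /eqP HH]]] := edge_kind e;
  by rewrite /edge HT HH ?setU0 cards2 uv.
Qed.

Lemma adjA_edge e x y : x != y -> x \in edge e -> y \in edge e ->
  adj x y = (x \in T e)%:R.
Proof.
move=> xy xe ye; rewrite mxE.
have -> : [exists e', und e' x y || dir e' x y] = und e x y || dir e x y.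
  apply/existsP/idP => [[e' pe']|]; last by exists e.
  have /andP[xe' ye'] := mem_edge_of_pair pe'.
  by rewrite -(edge_of_pair_uniq xy xe' ye' xe ye).
rewrite /is_undirected_edge /is_directed_edge xy /=.
case: (edge_cases e) => [[HT HH _]|[u [v [uv HT HH _]]]].
  by rewrite HT HH -(card2_set2 (card_edge e) xe ye xy) !eqxx xe.
have /negbTE v_neq0 : [set v] != set0 by apply/set0Pn; exists v; rewrite inE.
rewrite HT HH v_neq0 andbF (inj_eq set1_inj) inE eq_sym /=.
have [xu|//] := eqVneq x u.
by move: ye; rewrite /edge HT HH !inE -xu eq_sym (negbTE xy) /= => /eqP->; rewrite eqxx.
Qed.

Lemma F_edge_eq e x y : x \in edge e -> y \in edge e -> F e x = F e y.
Proof. by case: (edge_cases e) => [[_ _ HF]|[u [v [_ _ _ HF]]]] xe ye; rewrite !HF. Qed.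

Lemma F_edgeM e x y : x != y -> x \in edge e -> y \in edge e ->
  F e x * F e y = (x \in T e)%:R + (y \in T e)%:R.
Proof.
move=> xy xe ye; case: (edge_cases e) => [[HT _ HF]|[u [v [uv HT HH HF]]]].
  by rewrite !HF // HT xe ye -expr2 sqr_sqrtr ?ler0n // -natrD.
rewrite !HF // mulr1 HT !inE; move: xe ye xy; rewrite /edge HT HH !inE.
by move=> /orP[]/eqP-> /orP[]/eqP->; rewrite ?eqxx // => _; rewrite eq_sym (negbTE uv) ?addr0 ?add0r.
Qed.


Lemma symA_edge e x y : x != y -> x \in edge e -> y \in edge e ->
  symA R T Hd x y = 2^-1 * (F e x * F e y).
Proof.
move=> xy xe ye; have yx : y != x by rewrite eq_sym.
by rewrite symA_adjA (adjA_edge yx ye xe) (adjA_edge xy xe ye) F_edgeM.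
Qed.

Lemma Hq_edge e x y : x != y -> x \in edge e -> y \in edge e ->
  Hq T Hd q x y = 2^-1 * (conjc (B e x) * B e y).
Proof.
move=> xy xe ye; have yx : y != x by rewrite eq_sym.
rewrite Hq_adjA (symA_edge xy xe ye) (adjA_edge xy xe ye) (adjA_edge yx ye xe).
by rewrite Bq_conjM // xe ye rmorphM fmorphV rmorph_nat mulrA.
Qed.

Lemma sum_edges_of_pair (V : zmodType) e0 x y (f : 'I_m -> V) :
  x != y -> x \in edge e0 -> y \in edge e0 ->
  (forall e, ~~ ((x \in edge e) && (y \in edge e)) -> f e = 0) ->
  \sum_e f e = f e0.
Proof.
move=> xy xe ye f0; rewrite (bigD1 e0) //= big1 ?addr0 // => e ne0.
apply: f0; apply: contra ne0 => /andP[xe' ye'].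
by rewrite (edge_of_pair_uniq xy xe' ye' xe ye).
Qed.

Lemma Hq_sum x y : x != y ->
  Hq T Hd q x y = 2^-1 * \sum_e conjc (B e x) * B e y.
Proof.
move=> xy; case: (pickP (fun e => (x \in edge e) && (y \in edge e))) => [e0 /andP[xe ye]|nxy].
  rewrite (Hq_edge xy xe ye) (sum_edges_of_pair xy xe ye) // => e.
  by rewrite Bq_conjM // => /negbTE->.
have {}nxy e : ~~ ((x \in edge e) && (y \in edge e)) by rewrite nxy.
have nyx e : ~~ ((y \in edge e) && (x \in edge e)) by rewrite andbC nxy.
rewrite Hq_adjA symA_adjA !adjA_nonadjacent // addr0 mulr0 rmorph0 mul0r.
by rewrite big1 ?mulr0 // => e _; rewrite Bq_conjM // (negbTE (nxy e)).
Qed.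

Lemma symA_sumE x y : symA R T Hd x y = \sum_e
  (if (x != y) && (x \in edge e) && (y \in edge e) then 2^-1 * (F e x * F e y) else 0).
Proof.
have [<-|xy] := eqVneq x y; first by rewrite symA_diag big1.
case: (pickP (fun e => (x \in edge e) && (y \in edge e))) => [e0 /andP[xe ye]|nxy].
  rewrite (symA_edge xy xe ye) (sum_edges_of_pair xy xe ye) ?xy ?xe ?ye // => e.
  by move=> /negbTE->.
have {}nxy e : ~~ ((x \in edge e) && (y \in edge e)) by rewrite nxy.
have nyx e : ~~ ((y \in edge e) && (x \in edge e)) by rewrite andbC nxy.
rewrite symA_adjA !adjA_nonadjacent // addr0 mulr0 big1 // => e _.
by rewrite -andbA (negbTE (nxy e)) andbF.
Qed.

Lemma sum_symA x :
  \sum_v symA R T Hd x v = \sum_(e | x \in edge e) 2^-1 * (F e x * F e x).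
Proof.
under eq_bigr do rewrite symA_sumE.
rewrite exchange_big [RHS]big_mkcond; apply: eq_bigr => e _ /=.
have [xe|xNe] := boolP (x \in edge e); last by rewrite big1 // => v _; rewrite andbF.
have [y Dx] := card2_setD1 (card_edge e) xe.
have /setD1P[_ ye] : y \in edge e :\ x by rewrite Dx set11.
transitivity (\sum_(v in edge e :\ x) 2^-1 * (F e x * F e v)).
  by rewrite [RHS]big_mkcond; apply: eq_bigr => v _; rewrite in_setD1 andbT eq_sym.
by rewrite Dx big_set1 (F_edge_eq ye xe).
Qed.

End MixedGraph.

Theorem theorem5 (R : realType) (n m : nat)
  (T Hd : 'I_m -> {set 'I_n}) (F : 'I_m -> 'I_n -> R) (q : R) :
  is_dhypergraph T Hd ->
  (forall e : 'I_m, exists u v : 'I_n,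
      is_undirected_edge T Hd e u v || is_directed_edge T Hd e u v) ->
  (forall (e1 e2 : 'I_m) (u v : 'I_n), u != v ->
      u \in edge T Hd e1 -> v \in edge T Hd e1 ->
      u \in edge T Hd e2 -> v \in edge T Hd e2 -> e1 = e2) ->
  (forall (e : 'I_m) (u v w : 'I_n), is_undirected_edge T Hd e u v ->
      w \in edge T Hd e -> F e w = Num.sqrt 2) ->
  (forall (e : 'I_m) (u v w : 'I_n), is_directed_edge T Hd e u v ->
      w \in edge T Hd e -> F e w = 1) ->
  sheafLaplacian T Hd F q = magneticLaplacian T Hd q.
Proof.
move=> HG kinds uniq F_und F_dir.
apply/matrixP => x y.
rewrite sheafLaplacian_card2E; last exact: card_edge kinds.
rewrite magneticLaplacianE; have [<-|xy] := eqVneq x y; last first.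
  by rewrite (Hq_sum q HG kinds uniq F_und F_dir xy) !mulr0n rmorph0 !sub0r.
rewrite Hq_diag subr0 (sum_symA kinds uniq F_und F_dir) (sum_conjBq_diag F q HG).
rewrite !mulr1n -mulr_sumr -rmorph_sum rmorphM fmorphV rmorph_nat.
by field.
Qed.
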